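(* Let $F,G\in\mathcal{D}_0$ with $F \leftrightarrow (A,(x_j,p_j)_{j\in A})$ and $G\leftrightarrow (B,(y_j,q_j)_{j\in B})$. If $F\le_{\wedge\text{-disc}} G$, then $F\le_{wd} G$, i.e. $Q_X(\varepsilon)\ge Q_Y(\varepsilon)$ for all $\varepsilon>0$, where $X\sim F$, $Y\sim G$.
   Context: For a real random variable $X$, its Lévy concentration function is $Q_X(\varepsilon)=\sup_{x_0\in\mathbb{R}}\Pr\{X\in[x_0,x_0+\varepsilon]\}$, $\varepsilon>0$. For random variables $X,Y$ (or their distribution functions), write $X\le_{wd}Y$ if $Q_X(\varepsilon)\ge Q_Y(\varepsilon)$ for all $\varepsilon>0$. $\mathcal{D}_0$ is the set of discrete distributions $F$ on $\mathbb{R}$ whose support is order-isomorphic to a subset of $\mathbb{Z}$ with at least two elements. For $F\in\mathcal{D}_0$ there is a unique index set $A\in\{\mathbb{Z},\mathbb{N},-\mathbb{N}\}\cup\{\{1,\dots,n\}:n\ge 2\}$ order-isomorphic to $\operatorname{supp}(F)$ and a unique sequence $(x_j,p_j)_{j\in A}$ with $x_i<x_j$ for $i<j$, $p_j>0$, $\sum_{j\in A}p_j=1$, $\Pr(X=x_j)=p_j$ for $X\sim F$, where in the case $A=\mathbb{Z}$ the indexing is normalized by $\inf\{j\in\mathbb{Z}:\sum_{i\le j}p_i\ge 1/2\}=0$; this is written $F\leftrightarrow(A,(x_j,p_j)_{j\in A})$. Conventions: $x_a=-\infty$, $F(x_a)=0$ for $a<\min A$, and $x_a=+\infty$, $F(x_a)=1$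 for $a>\max A$ (when these exist); similarly for $G$. Let $A^\circ=A\setminus\{\min A\}$ (and $A^\circ=A$ if $A$ has no minimum), similarly $B^\circ$. For $a\in A,b\in B$ write $a\sim b$ iff $(F(x_{a-1}),F(x_a))\cap(G(y_{b-1}),G(y_b))\neq\emptyset$. For $a\in A^\circ,b\in B^\circ$ write $a\sim_\wedge b$ iff $a\sim b$ and $a-1\sim b-1$. Define $F\le_{\wedge\text{-disc}}G$ (''$G$ is at least as $\wedge$-discretely dispersed as $F$'') iff (i) $q_b\le p_a$ for all $(a,b)\in A\times B$ with $a\sim b$, and (ii) $x_a-x_{a-1}\le y_b-y_{b-1}$ for all $(a,b)\in A^\circ\times B^\circ$ with $a\sim_\wedge b$. *)

From HB Require Import structures.
From mathcomp Require Import all_boot all_order all_algebra.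
From mathcomp Require Import all_classical all_reals esum ereal.
Set Implicit Arguments. Unset Strict Implicit. Unset Printing Implicit Defensive.
Import Order.TTheory GRing.Theory Num.Theory.
Local Open Scope classical_set_scope.
Local Open Scope ring_scope.
Local Open Scope ereal_scope.

Section Disc.
Variable R : realType.

(* A discrete distribution in D_0, given by its index set A (a convex subset
   of int with >= 2 elements, hence order-isomorphic to Z, N, -N or {1..n}),
   strictly increasing atoms x_j and positive masses p_j summing to 1. *)
Definition Zconvex (A : set int) : Prop :=
  forall i j k : int, A i -> A k -> (i <= j)%R -> (j <= k)%R -> A j.

Definition inD0 (A : set int) (x p : int -> R) : Prop :=
  [/\ Zconvex A,
      (exists i j, [/\ A i, A j & i != j]),
      (forall i j, A i -> A j -> (i < j)%R -> (x i < x j)%R),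
      (forall j, A j -> (0 < p j)%R)
    & \esum_(j in A) (p j)%:E = 1].

(* F(x_a) = sum_{i in A, i <= a} p_i ; this gives F(x_a)=0 below min A and
   F(x_a)=1 above max A, matching the paper's conventions. *)
Definition cdf_at (A : set int) (p : int -> R) (a : int) : \bar R :=
  \esum_(i in [set i | A i /\ (i <= a)%R]) (p i)%:E.

Definition prob_interval (A : set int) (x p : int -> R) (x0 eps : R) : \bar R :=
  \esum_(j in [set j | A j /\ (x0 <= x j <= x0 + eps)%R]) (p j)%:E.

Definition Qconc (A : set int) (x p : int -> R) (eps : R) : \bar R :=
  ereal_sup (range (fun x0 : R => prob_interval A x p x0 eps)).

Definition le_wd (A : set int) (x p : int -> R) (B : set int) (y q : int -> R) : Prop :=
  forall eps : R, (0 < eps)%R -> Qconc B y q eps <= Qconc A x p eps.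

Definition sim (A : set int) (p : int -> R) (B : set int) (q : int -> R)
  (a b : int) : Prop :=
  exists t : R, [/\ cdf_at A p (a - 1)%R < t%:E, t%:E < cdf_at A p a,
                    cdf_at B q (b - 1)%R < t%:E & t%:E < cdf_at B q b].

(* F <=_{wedge-disc} G.  For convex A, a in A° iff a in A and a-1 in A. *)
Definition le_wedge_disc (A : set int) (x p : int -> R) (B : set int) (y q : int -> R) : Prop :=
  (forall a b, A a -> B b -> sim A p B q a b -> (q b <= p a)%R) /\
  (forall a b, A a -> A (a - 1)%R -> B b -> B (b - 1)%R ->
     sim A p B q a b -> sim A p B q (a - 1)%R (b - 1)%R ->
     (x a - x (a - 1) <= y b - y (b - 1))%R).

End Disc.

(* Given
   atoms b <= b' of G in a window of length eps, it suffices to find atoms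
   s, e of F with F(x_e) - F(x_(s-1)) >= G(y_b') - G(y_(b-1)) and
   x_e - x_s <= y_b' - y_b.  Start from the atom l of F whose mass interval
   holds the level G(y_(b-1)) and follow, for c = b, ..., b', the atom e of F
   whose mass interval (F(x_(e-1)), F(x_e)] holds G(y_c).  Condition (i)
   (q_c <= p_a for overlapping mass intervals) makes e advance by at most one
   per step, and an advance happens between two consecutive pairs of
   overlapping intervals, so condition (ii) bounds it by the spacing
   y_c - y_(c-1).  The one advance not matched in this way is the first one,
   when the interval of b straddles those of l and l + 1: it is paid for by
   the next spacing of G, or else the atom l is left out of the window. *)

From HB Require Import structures.
From mathcomp Require Import all_boot all_order all_algebra.
From mathcomp Require Import all_classical all_reals esum ereal.
From mathcomp Require Import finmap lra zify.
Set Implicit Arguments. Unset Strict Implicit. Unset Printing Implicit Defensive.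
Import Order.TTheory GRing.Theory Num.Theory.
Local Open Scope classical_set_scope.
Local Open Scope ring_scope.

Lemma finite_set_min d (T : orderType d) (X : set T) : finite_set X -> X !=set0 ->
  exists2 m, X m & forall i, X i -> (m <= i)%O.
Proof.
move=> /finite_fsetP[S ->] [i /= Si].
case: (@arg_minP _ _ S (FSetSub Si) xpredT val isT) => m _ min_m.
by exists (val m) => [|j /= Sj]; [exact: valP | exact: (min_m (FSetSub Sj))].
Qed.

Lemma finite_set_max d (T : orderType d) (X : set T) : finite_set X -> X !=set0 ->
  exists2 m, X m & forall i, X i -> (i <= m)%O.
Proof.
move=> /finite_fsetP[S ->] [i /= Si].
case: (@arg_maxP _ _ S (FSetSub Si) xpredT val isT) => m _ max_m.
by exists (val m) => [|j /= Sj]; [exact: valP | exact: (max_m (FSetSub Sj))].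
Qed.

Lemma esum_le_subset (R : realType) (T : choiceType) (S S' : set T) (f : T -> \bar R) :
  S `<=` S' -> (\esum_(i in S) f i <= \esum_(i in S') f i)%E.
Proof.
move=> SS'; apply: le_ereal_sup => _ [X [finX XS] <-].
by exists X => //; split => //; exact: subset_trans SS'.
Qed.

Lemma open_intervals_meet (R : realFieldType) (u1 u2 v1 v2 : R) :
  u1 < v2 -> v1 < u2 -> u1 < u2 -> v1 < v2 ->
  exists t, [/\ u1 < t, t < u2, v1 < t & t < v2].
Proof.
move=> uv vu uu vv.
have [uv1|uv1] := leP u1 v1; have [uv2|uv2] := leP u2 v2.
- by exists ((v1 + u2) / 2); split; lra.
- by exists ((v1 + v2) / 2); split; lra.
- by exists ((u1 + u2) / 2); split; lra.
- by exists ((u1 + v2) / 2); split; lra.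
Qed.

Lemma int_crossing (R : realDomainType) (f : int -> R) (L : R) a0 a1 :
  a0 <= a1 -> f a0 <= L < f a1 -> exists l, f (l - 1) <= L < f l.
Proof.
move=> le01 /andP[fa0].
have [n ->] : exists n : nat, a1 = a0 + n%:Z by exists `|a1 - a0|%N; lia.
elim: n => [|n IHn] fa1; first by move: fa1; rewrite addr0; lra.
have [fn|fn] := leP (f (a0 + n%:Z)) L; last exact: IHn.
by exists (a0 + n.+1%:Z); rewrite (_ : a0 + n.+1%:Z - 1 = a0 + n%:Z) ?fn //; lia.
Qed.

Section Cdf.
Variables (R : realType) (A : set int) (p : int -> R).
Hypothesis p_gt0 : forall j, A j -> 0 < p j.
Hypothesis p_sum1 : (\esum_(j in A) (p j)%:E = 1)%E.

Definition cdf a : R := fine (cdf_at A p a).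

Let p_ge0 i : A i -> (0 <= (p i)%:E)%E.
Proof. by move=> Ai; rewrite lee_fin ltW ?p_gt0. Qed.

Lemma esum_subA_bounds S : S `<=` A -> (0 <= \esum_(i in S) (p i)%:E <= 1)%E.
Proof.
move=> SA; apply/andP; split; first by apply: esum_ge0 => i /SA; exact: p_ge0.
by rewrite -p_sum1 esum_le_subset.
Qed.

Lemma esum_subA_fin_num S : S `<=` A -> \esum_(i in S) (p i)%:E \is a fin_num.
Proof.
move=> /esum_subA_bounds /andP[ge0 le1].
by rewrite ge0_fin_numE // (le_lt_trans le1) // ltry.
Qed.

Lemma cdf_atE a : cdf_at A p a = (cdf a)%:E.
Proof. by rewrite fineK // esum_subA_fin_num // => i []. Qed.

Lemma cdf_bounds a : 0 <= cdf a <= 1.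
Proof. by rewrite -!lee_fin -cdf_atE; apply: esum_subA_bounds => i []. Qed.

Lemma cdf_ge0 a : 0 <= cdf a.
Proof. by have /andP[] := cdf_bounds a. Qed.

Lemma cdf_le1 a : cdf a <= 1.
Proof. by have /andP[] := cdf_bounds a. Qed.

Lemma cdf_atD s e : s - 1 <= e ->
  cdf_at A p e =
  (cdf_at A p (s - 1) + \esum_(i in [set i | A i /\ (s <= i <= e)%R]) (p i)%:E)%E.
Proof.
move=> se; rewrite /cdf_at (esumID [set i | i <= s - 1]); last by move=> i [/p_ge0].
congr (_ + _)%E; congr esum; apply/seteqP; split => i /=.
- by move=> [[Ai ie] ils]; split => //; lia.
- by move=> [Ai ils]; split => //; split => //; lia.
- by move=> [[Ai ie] /negP]; rewrite -ltNge => si; split => //; lia.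
- by move=> [Ai /andP[si ie]]; split => //; lia.
Qed.

Lemma esum_interval s e : s - 1 <= e ->
  \esum_(i in [set i | A i /\ s <= i <= e]) (p i)%:E = (cdf e - cdf (s - 1))%:E.
Proof.
have fin : \esum_(i in [set i | A i /\ s <= i <= e]) (p i)%:E \is a fin_num.
  by apply: esum_subA_fin_num => i [].
move=> /cdf_atD; rewrite !cdf_atE -(fineK fin) -EFinD => -[h].
by congr EFin; lra.
Qed.

Lemma cdf_atS a :
  cdf_at A p a = (cdf_at A p (a - 1) + \esum_(i in A `&` [set a]) (p i)%:E)%E.
Proof.
rewrite (@cdf_atD a a) ?gerBl //; congr (_ + esum _ _)%E.
by apply/seteqP; split => i /= [Ai ia]; split => //; lia.
Qed.

Lemma cdf_in a : A a -> cdf a = cdf (a - 1) + p a.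
Proof.
move=> Aa; apply: EFin_inj; rewrite EFinD -!cdf_atE cdf_atS.
have -> : A `&` [set a] = [set a] by apply/seteqP; split => [i []|i ->].
by rewrite esum_set1 // p_ge0.
Qed.

Lemma cdf_notin a : ~ A a -> cdf a = cdf (a - 1).
Proof.
move=> nAa; apply: EFin_inj; rewrite -!cdf_atE cdf_atS.
have -> : A `&` [set a] = set0 by apply/seteqP; split => i // [Ai ia]; apply: nAa; rewrite -ia.
by rewrite esum_set0 adde0.
Qed.

Lemma cdf_le a b : a <= b -> cdf a <= cdf b.
Proof.
move=> ab; rewrite -lee_fin -!cdf_atE (@cdf_atD (a + 1) b) ?addrK; last lia.
by rewrite leeDl // esum_ge0 // => i [/p_ge0].
Qed.

Lemma cdf_lt_in a : A a -> cdf (a - 1) < cdf a.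
Proof. by move=> Aa; rewrite [cdf a](cdf_in Aa) ltrDl p_gt0. Qed.

Lemma cdf_ltA a : cdf (a - 1) < cdf a -> A a.
Proof. by move=> lt; apply: contrapT => /cdf_notin eq; move: lt; rewrite eq ltxx. Qed.

Lemma cdf_lt1 a : cdf a < 1 -> exists2 i, A i & a < i.
Proof.
move=> lt1; apply: contrapT => none.
suff : cdf_at A p a = 1%E by rewrite cdf_atE => -[eq1]; move: lt1; rewrite eq1 ltxx.
rewrite -p_sum1; congr esum; apply/seteqP; split => i /=; first by case.
by move=> Ai; split => //; rewrite leNgt; apply/negP => ai; apply: none; exists i.
Qed.

Lemma cdf_gt0 a : 0 < cdf a -> exists2 i, A i & i <= a.
Proof.
move=> gt0; apply: contrapT => none.
suff : cdf_at A p a = 0%E by rewrite cdf_atE => -[eq0]; move: gt0; rewrite eq0 ltxx.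
rewrite /cdf_at (_ : [set i | _] = set0) ?esum_set0 //.
by apply/seteqP; split => i // [Ai ia]; apply: none; exists i.
Qed.

Lemma cdf_window eps : 0 < eps -> exists m M, m - 1 <= M /\ 1 - eps < cdf M - cdf (m - 1).
Proof.
move=> eps0.
have : ((1 - eps)%:E < \esum_(j in A) (p j)%:E)%E by rewrite p_sum1 lte_fin; lra.
move=> /ereal_sup_gt [_ [X [finX XA] <-] ltX].
have [X0|/set0P neX] := eqVneq X set0.
  by exists 1, 0; split => //; move: ltX; rewrite X0 fsbig_set0 lte_fin !subrr.
have [m Xm minX] := finite_set_min finX neX.
have [M XM maxX] := finite_set_max finX neX.
exists m, M; split; first by have := minX _ XM; lia.
rewrite -lte_fin -esum_interval; last by have := minX _ XM; lia.
apply: (lt_le_trans ltX); apply: esum_ge; exists X => //.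
by split => // i Xi; split; [exact: XA | rewrite minX ?maxX].
Qed.

Lemma cdf_large eps : 0 < eps -> exists a, 1 - eps < cdf a.
Proof. by move=> /cdf_window[m [M [_ win]]]; exists M; have := cdf_ge0 (m - 1); lra. Qed.

Lemma cdf_small eps : 0 < eps -> exists a, cdf a < eps.
Proof. by move=> /cdf_window[m [M [_ win]]]; exists (m - 1); have := cdf_le1 M; lra. Qed.

Lemma Qconc_ge0 (x : int -> R) eps : (0 <= Qconc A x p eps)%E.
Proof.
apply: le_trans (ereal_sup_ubound _); last by exists 0.
by apply: esum_ge0 => i [/p_ge0].
Qed.

Lemma cdf_window_le_prob (x : int -> R) s e eps :
  (forall i j, A i -> A j -> i < j -> x i < x j) -> A s -> A e -> x e - x s <= eps ->
  ((cdf e - cdf (s - 1))%:E <= prob_interval A x p (x s) eps)%E.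
Proof.
move=> x_incr As Ae span.
have x_le i j : A i -> A j -> i <= j -> x i <= x j.
  by move=> Ai Aj; rewrite le_eqVlt => /predU1P[->|/x_incr]; [|move=> /(_ Ai Aj)/ltW].
have [es|se] := ltP e s.
  apply: le_trans (esum_ge0 _); last by move=> i [/p_ge0].
  by rewrite lee_fin subr_le0 cdf_le //; lia.
rewrite -esum_interval; last lia.
apply: esum_le_subset => i [Ai /andP[si ie]]; split => //.
by have := x_le _ _ As Ai si; have := x_le _ _ Ai Ae ie; move=> *; apply/andP; split; lra.
Qed.

End Cdf.

Section Coupling.
Variables (R : realType) (A B : set int) (x p y q : int -> R).
Hypotheses (A_convex : Zconvex A) (B_convex : Zconvex B).
Hypothesis x_incr : forall i j, A i -> A j -> i < j -> x i < x j.
Hypothesis y_incr : forall i j, B i -> B j -> i < j -> y i < y j.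
Hypotheses (p_gt0 : forall j, A j -> 0 < p j) (p_sum1 : (\esum_(j in A) (p j)%:E = 1)%E).
Hypotheses (q_gt0 : forall j, B j -> 0 < q j) (q_sum1 : (\esum_(j in B) (q j)%:E = 1)%E).
Hypothesis wedge : le_wedge_disc A x p B y q.

Local Notation F := (cdf A p).
Local Notation G := (cdf B q).

Lemma sim_of_overlap a c : A a -> B c -> F (a - 1) < G c -> G (c - 1) < F a ->
  sim A p B q a c.
Proof.
move=> Aa Bc ac ca.
have [t [t1 t2 t3 t4]] := open_intervals_meet ac ca
  (cdf_lt_in p_gt0 p_sum1 Aa) (cdf_lt_in q_gt0 q_sum1 Bc).
by exists t; rewrite !(cdf_atE p_gt0 p_sum1) !(cdf_atE q_gt0 q_sum1) !lte_fin.
Qed.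

Lemma mass_le a c : A a -> B c -> F (a - 1) < G c -> G (c - 1) < F a -> q c <= p a.
Proof. by move=> Aa Bc ac ca; apply: wedge.1 => //; exact: sim_of_overlap. Qed.

Lemma spacing_le a c : A a -> A (a + 1) -> B c -> B (c + 1) ->
  F (a - 1) < G c -> G (c - 1) < F a -> F a < G (c + 1) -> G c < F (a + 1) ->
  x (a + 1) - x a <= y (c + 1) - y c.
Proof.
move=> Aa Aa1 Bc Bc1 ac ca ac1 ca1.
have := wedge.2 (a + 1) (c + 1); rewrite !addrK.
by apply => //; apply: sim_of_overlap; rewrite ?addrK.
Qed.

Lemma A_succ a : A a -> F a < 1 -> A (a + 1).
Proof. by move=> Aa /(cdf_lt1 p_gt0 p_sum1)[i Ai ai]; apply: (A_convex Aa Ai); lia. Qed.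

Lemma cover_succ a c : A a -> B c -> G (c - 1) <= F a -> F a < G c ->
  A (a + 1) /\ G c - G (c - 1) <= F (a + 1) - F a.
Proof.
move=> Aa Bc ca ac.
have Aa1 : A (a + 1) by apply: A_succ => //; have := cdf_le1 q_gt0 q_sum1 c; lra.
split => //; have := @mass_le (a + 1) c Aa1 Bc; rewrite addrK.
have := cdf_in p_gt0 p_sum1 Aa1; rewrite addrK.
by have := cdf_in q_gt0 q_sum1 Bc; have := p_gt0 Aa1; lra.
Qed.

Lemma cdf_below b : B b -> exists a, F a <= G (b - 1).
Proof.
move=> Bb; apply: contrapT => none.
(* Otherwise every atom of [F] far enough to the left overlaps the atom [b] of
   [G], hence has mass at least [q b]: infinitely many of them. *)
have above a : G (b - 1) < F a by rewrite ltNge; apply/negP => le; apply: none; exists a.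
have Gb0 : 0 < G b.
  by have := cdf_ge0 q_gt0 q_sum1 (b - 1); have := cdf_lt_in q_gt0 q_sum1 Bb; lra.
have [a0 Fa0] := cdf_small p_gt0 p_sum1 Gb0.
have left_blocks a : a <= a0 -> A a /\ q b <= p a.
  move=> aa0; have Aa : A a.
    have [i Ai ia] : exists2 i, A i & i <= a - 1.
      apply: (cdf_gt0 p_gt0 p_sum1).
      by have := above (a - 1); have := cdf_ge0 q_gt0 q_sum1 (b - 1); lra.
    have [j Aj a0j] : exists2 j, A j & a0 < j.
      by apply: (cdf_lt1 p_gt0 p_sum1); have := cdf_le1 q_gt0 q_sum1 b; lra.
    by apply: (A_convex Ai Aj); lia.
  split => //; apply: mass_le => //.
  have /(cdf_le p_gt0 p_sum1) : a - 1 <= a0 by lia.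
  lra.
have grow n : n%:R * q b <= F a0 - F (a0 - n%:Z).
  elim: n => [|n IHn]; first by rewrite mul0r subr0 subrr.
  have [Aan qp] : A (a0 - n%:Z) /\ q b <= p (a0 - n%:Z) by apply: left_blocks; lia.
  rewrite (_ : a0 - n.+1%:Z = a0 - n%:Z - 1); last lia.
  by rewrite -natr1 mulrDl mul1r; move: IHn; rewrite (cdf_in p_gt0 p_sum1 Aan); lra.
have qb0 := q_gt0 Bb.
have qinv : 0 <= (q b)^-1 by rewrite invr_ge0 ltW.
have := archi_boundP qinv; set N := Num.bound _; rewrite -div1r ltr_pdivrMr // => big.
have := grow N; have := cdf_le1 p_gt0 p_sum1 a0; have := cdf_ge0 p_gt0 p_sum1 (a0 - N%:Z).
lra.
Qed.

Lemma left_cover b : B b -> exists2 l, A l & F (l - 1) <= G (b - 1) < F l.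
Proof.
move=> Bb; have [a0 below] := cdf_below Bb.
have Gb1 : G (b - 1) < 1.
  by have := cdf_le1 q_gt0 q_sum1 b; have := cdf_lt_in q_gt0 q_sum1 Bb; lra.
have [a1 above] : exists a1, G (b - 1) < F a1.
  by have [|a1] := cdf_large p_gt0 p_sum1 (_ : 0 < 1 - G (b - 1)); [lra | exists a1; lra].
have a01 : a0 <= a1.
  by rewrite leNgt; apply/negP => /ltW /(cdf_le p_gt0 p_sum1); lra.
have [l /andP[l1 l2]] := int_crossing a01 (introT andP (conj below above)).
by exists l; [apply: (cdf_ltA p_gt0 p_sum1); lra | rewrite l1].
Qed.

(* The second alternative records a debt: the step from [l] to [l + 1] has
   not been matched with a spacing of [G] yet.  It is paid by the next
   spacing, and if none is left the atom [l] is dropped from the window. *)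
Definition reachable b l c := exists e, [/\ A e, F (e - 1) < G c, G c <= F e &
  x e - x l <= y c - y b \/
  [/\ G c < F e, A (l + 1), G c - G (b - 1) <= F e - F l,
      x e - x (l + 1) <= y c - y b & B (c + 1) -> x e - x l <= y (c + 1) - y b]].

Lemma reachable_start b l : B b -> A l -> F (l - 1) <= G (b - 1) -> G (b - 1) < F l ->
  reachable b l b.
Proof.
move=> Bb Al Fl1 Fl; have Gb := cdf_lt_in q_gt0 q_sum1 Bb.
have [Gl|lG] := leP (G b) (F l).
  by exists l; split => //; [lra | left; rewrite !subrr].
have [Al1 step] := cover_succ Al Bb (ltW Fl) lG.
exists (l + 1); rewrite addrK; split => //; first lra.
right; split => //; [lra | by rewrite !subrr | move=> Bb1].
have := cdf_lt_in q_gt0 q_sum1 Bb1; rewrite addrK => Gb1.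
by apply: spacing_le => //; lra.
Qed.

Lemma reachable_succ b l c : B c -> B (c + 1) -> reachable b l c -> reachable b l (c + 1).
Proof.
move=> Bc Bc1 [e [Ae Fe1 Fe st]].
have Gc1 : G c < G (c + 1) by have := cdf_lt_in q_gt0 q_sum1 Bc1; rewrite addrK.
have yc1 : y c <= y (c + 1) by apply/ltW/y_incr => //; lia.
have Gc0 := cdf_lt_in q_gt0 q_sum1 Bc.
have [stay|cross] := leP (G (c + 1)) (F e).
  exists e; split => //; first lra.
  by left; case: st => [|[_ _ _ _ /(_ Bc1)]]; lra.
have Fe' : G (c + 1 - 1) <= F e by rewrite addrK.
have [Ae1 step] := cover_succ Ae Bc1 Fe' cross.
rewrite addrK in step.
have spacing_c : x (e + 1) - x e <= y (c + 1) - y c by apply: spacing_le => //; lra.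
exists (e + 1); rewrite addrK; split => //; first lra.
case: st => [free|[Gce Al1 mass span ahead]]; first by left; lra.
right; split => //; [lra | lra | lra | move=> Bc2].
have := cdf_lt_in q_gt0 q_sum1 Bc2; rewrite addrK => Gc2.
have := ahead Bc1; have : x (e + 1) - x e <= y (c + 1 + 1) - y (c + 1).
  by apply: spacing_le; rewrite ?addrK //; lra.
lra.
Qed.

Lemma reachable_le b l b' : B b -> B b' -> b <= b' -> reachable b l b -> reachable b l b'.
Proof.
move=> Bb Bb' bb' start.
suff reach n : b + n%:Z <= b' -> reachable b l (b + n%:Z).
  by have := reach `|b' - b|%N; rewrite (_ : b + _ = b'); [apply; lia | lia].
elim: n => [|n IHn] bn; first by rewrite addr0.
have inB c : b <= c <= b' -> B c by move=> /andP[bc cb']; exact: (B_convex Bb Bb').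
rewrite (_ : b + n.+1%:Z = b + n%:Z + 1); last lia.
apply: reachable_succ; [apply: inB | apply: inB | apply: IHn]; lia.
Qed.

Lemma block_coupling b b' : B b -> B b' -> b <= b' -> exists s e,
  [/\ A s, A e, G b' - G (b - 1) <= F e - F (s - 1) & x e - x s <= y b' - y b].
Proof.
move=> Bb Bb' bb'; have [l Al /andP[Fl1 Fl]] := left_cover Bb.
have [e [Ae _ Fe [free|[_ Al1 mass span _]]]] :=
  reachable_le Bb Bb' bb' (reachable_start Bb Al Fl1 Fl).
  by exists l, e; split => //; lra.
by exists (l + 1), e; rewrite addrK.
Qed.

Lemma Qconc_ge_block eps b b' : B b -> B b' -> b <= b' -> y b' - y b <= eps ->
  ((G b' - G (b - 1))%:E <= Qconc A x p eps)%E.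
Proof.
move=> Bb Bb' bb' span; have [s [e [As Ae mass span_se]]] := block_coupling Bb Bb' bb'.
apply: le_trans (ereal_sup_ubound _); last by exists (x s).
apply: le_trans (cdf_window_le_prob p_gt0 p_sum1 x_incr As Ae _); last lra.
by rewrite lee_fin.
Qed.

End Coupling.

Theorem theorem4p1 (R : realType) (A : set int) (x p : int -> R)
  (B : set int) (y q : int -> R) :
  inD0 A x p -> inD0 B y q ->
  le_wedge_disc A x p B y q -> le_wd A x p B y q.
Proof.
move=> [Aconv _ x_incr p_gt0 p_sum1] [Bconv _ y_incr q_gt0 q_sum1] wedge eps _.
apply: ge_ereal_sup => _ [y0 _ <-]; apply: ge_ereal_sup => _ [X [finX XJ] <-].
have [->|/set0P neX] := eqVneq X set0; first by rewrite fsbig_set0 Qconc_ge0.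
have [b Xb minX] := finite_set_min finX neX.
have [b' Xb' maxX] := finite_set_max finX neX.
have [Bb /andP[yb _]] := XJ _ Xb; have [Bb' /andP[_ yb']] := XJ _ Xb'.
have bb' : b <= b' := minX _ Xb'.
apply: le_trans (Qconc_ge_block Aconv Bconv x_incr y_incr p_gt0 p_sum1 q_gt0 q_sum1
  wedge Bb Bb' bb' _); last lra.
rewrite -esum_interval //; last lia.
apply: esum_ge; exists X => //; split => // i Xi.
by have [Bi _] := XJ _ Xi; split; rewrite // minX ?maxX.
Qed.
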